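(* Let $\mathcal{A}\subseteq\mathcal{P}_\infty(\mathbb{N})$ be a $C$-measurable M-family and let $\mathbf{C}=(C_n)_n$ be a sequence in $\mathcal{A}$ of pairwise disjoint sets. Then for every $N\in\mathcal{P}_\infty(\mathbb{N})$ there exists $L\in\mathcal{P}_\infty(N)$ such that $\Delta_{\mathbf{C}}(M)\in\mathcal{A}$ for all $M\in\mathcal{P}_\infty(L)$.
   Context: $\mathcal{P}_\infty(X)$: infinite subsets of $X$, topologized as a subspace of $2^X$. $C$-measurable: belonging to the smallest $\sigma$-algebra containing the open sets and closed under the Souslin operation. An M-family is a hereditary (closed under infinite subsets) family $\mathcal{A}$ such that for every sequence $(A_n)_n$ in $\mathcal{A}$ there is $A\in\mathcal{A}$ with $A\setminus\bigcup_{i\ge n}A_i$ finite for every $n$. For pairwise disjoint infinite $C_n$ with increasing enumerations $C_n=\{x^n_0<x^n_1<\cdots\}$, define $\Delta_{\mathbf{C}}:\mathcal{P}_\infty(\mathbb{N})\to\mathcal{P}_\infty(\mathbb{N})$ by $\Delta_{\mathbf{C}}(L)=\{x^{l_{2n}}_{l_{2n+1}}:n\in\mathbb{N}\}$, where $L=\{l_0<l_1<\cdots\}$. *)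

From Stdlib Require Import Arith List.

Definition subset := nat -> Prop.
Definition family := subset -> Prop.

Definition infinite (X : subset) : Prop := forall n, exists m, n <= m /\ X m.
Definition finite (X : subset) : Prop := exists k, forall m, X m -> m < k.

Definition InfSub (Y X : subset) : Prop := infinite Y /\ forall m, Y m -> X m.

Definition open2N (U : family) : Prop :=
  forall x, U x -> exists n, forall y, (forall i, i < n -> (y i <-> x i)) -> U y.

Definition prefix (f : nat -> nat) (n : nat) : list nat := map f (seq 0 n).

Inductive Cmeas : family -> Prop :=
| cm_open (U : family) : open2N U -> Cmeas (fun x => infinite x /\ U x)
| cm_compl (A : family) : Cmeas A -> Cmeas (fun x => infinite x /\ ~ A x)
| cm_union (F : nat -> family) :
    (forall n, Cmeas (F n)) -> Cmeas (fun x => exists n, F n x)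
| cm_souslin (F : list nat -> family) :
    (forall s, Cmeas (F s)) ->
    Cmeas (fun x => exists f : nat -> nat, forall n, F (prefix f (S n)) x)
| cm_ext (A B : family) : Cmeas A -> (forall x, A x <-> B x) -> Cmeas B.

Definition hereditary (A : family) : Prop :=
  forall X Y, A X -> InfSub Y X -> A Y.

Definition M_family (A : family) : Prop :=
  hereditary A /\
  forall An : nat -> subset, (forall n, A (An n)) ->
    exists B, A B /\
      forall n, finite (fun m => B m /\ ~ (exists i, n <= i /\ An i m)).

Fixpoint nth_elem (X : subset) (k : nat) (m : nat) : Prop :=
  match k with
  | 0 => X m /\ forall j, j < m -> ~ X j
  | S k' => X m /\ exists p, p < m /\ nth_elem X k' p /\
                             forall j, p < j -> j < m -> ~ X j
  end.

(* Delta_C(L) = { x^{l_{2n}}_{l_{2n+1}} : n in N }, where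
   x^a_b is the b-th element of C a and l_k is the k-th element of L. *)
Definition Delta (C : nat -> subset) (L : subset) : subset :=
  fun m => exists n a b, nth_elem L (2 * n) a /\ nth_elem L (2 * n + 1) b /\
                         nth_elem (C a) b m.

(* The proof goes through the Ellentuck topology on infinite subsets of nat, whose basic
   sets [nbhd s k N] consist of the infinite X agreeing with the stem s below k and lying
   in N from k on.  A family is completely Ramsey when each basic set shrinks to one that
   lies inside the family or inside its complement.
   - A fusion lemma secures, at once for all stems, any property that is dense and
     stable under shrinking.
   - Ellentuck open families are completely Ramsey (Galvin-Prikry); completely Ramsey
     families are closed under complements, countable unions and the Souslin operation.
   - Delta_C is continuous, so M |-> A(Delta_C M) is completely Ramsey for C-measurable A.
   - Applied to the infinite subsets of N this gives L homogeneous for A or for its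
     complement; the second case is refuted by a diagonal argument using the M-family
     property. *)

From Stdlib Require Import Arith List Lia Classical ClassicalEpsilon Wf_nat.
Import ListNotations.

Lemma least_element (P : nat -> Prop) :
  (exists m, P m) -> exists m, P m /\ forall j, j < m -> ~ P j.
Proof.
  intros HP.
  destruct (dec_inh_nat_subset_has_unique_least_element P (fun n => classic (P n)) HP)
    as [m [[Pm Hmin] _]].
  exists m. split; [exact Pm|]. intros j Hj Pj. specialize (Hmin j Pj). lia.
Qed.

Lemma dependent_choice {T : Type} (Q : T -> Prop) (R : T -> T -> Prop) :
  (forall a, Q a -> exists b, Q b /\ R a b) ->
  forall a0, Q a0 -> exists f : nat -> T, f 0 = a0 /\ forall n, Q (f n) /\ R (f n) (f (S n)).
Proof.
  intros Hstep a0 Ha0.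
  destruct (choice (fun a b => Q a -> Q b /\ R a b)) as [g Hg].
  { intros a. destruct (classic (Q a)) as [Qa|nQa].
    - destruct (Hstep a Qa) as [b Hb]. exists b. auto.
    - exists a. intros Qa. contradiction. }
  assert (Inv : forall n, Q (Nat.iter n g a0)).
  { induction n as [|n IH]; [exact Ha0|apply (Hg _ IH)]. }
  exists (fun n => Nat.iter n g a0). split; [reflexivity|].
  intros n. split; [apply Inv|apply (Hg _ (Inv n))].
Qed.

Lemma increasing_lt (c : nat -> nat) :
  (forall i, c i < c (S i)) -> forall i i', i < i' -> c i < c i'.
Proof. intros H i i' L. induction L as [|i' L IH]; [apply H|specialize (H i'); lia]. Qed.

Lemma increasing_ge (c : nat -> nat) : (forall i, c i < c (S i)) -> forall i, i <= c i.
Proof. intros H i. induction i as [|i IH]; [lia|specialize (H i); lia]. Qed.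

Lemma infinite_range (c : nat -> nat) :
  (forall i, c i < c (S i)) -> infinite (fun x => exists i, c i = x).
Proof.
  intros H n. exists (c n). split; [apply increasing_ge; exact H|exists n; reflexivity].
Qed.

Lemma infinite_tail (M : subset) (b : nat) : infinite M -> infinite (fun m => M m /\ b <= m).
Proof.
  intros HM n. destruct (HM (n + b)) as [m [H1 H2]].
  exists m. split; [lia|split; [exact H2|lia]].
Qed.

(** ** Ellentuck neighbourhoods *)

Definition nbhd (s : subset) (k : nat) (N : subset) (X : subset) : Prop :=
  infinite X /\ (forall m, m < k -> (X m <-> s m)) /\ (forall m, k <= m -> X m -> N m).

Definition sub_from (j : nat) (M N : subset) : Prop := forall m, j <= m -> M m -> N m.

Lemma sub_from_refl j M : sub_from j M M.
Proof. intros m _ H. exact H. Qed.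

Lemma sub_from_trans j A B D : sub_from j A B -> sub_from j B D -> sub_from j A D.
Proof. unfold sub_from. eauto. Qed.

Lemma nbhd_infinite s k N X : nbhd s k N X -> infinite X.
Proof. intros [H _]. exact H. Qed.

Lemma nbhd_shrink s k M N X : sub_from k M N -> nbhd s k M X -> nbhd s k N X.
Proof. intros H [H1 [H2 H3]]. split; [exact H1|split; [exact H2|]]. intros m Hm Xm. apply H; auto. Qed.

Lemma nbhd_stem s s' k N X :
  (forall m, m < k -> (s m <-> s' m)) -> nbhd s k N X -> nbhd s' k N X.
Proof.
  intros E [H1 [H2 H3]]. split; [exact H1|split; [|exact H3]].
  intros m Hm. rewrite H2 by exact Hm. apply E, Hm.
Qed.

Lemma nbhd_nonempty s k M : infinite M -> exists X, nbhd s k M X.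
Proof.
  intros HM. exists (fun m => (m < k /\ s m) \/ (k <= m /\ M m)).
  split; [|split].
  - intros n. destruct (HM (n + k)) as [m [Hm1 Hm2]].
    exists m. split; [lia|right; split; [lia|exact Hm2]].
  - intros m Hm. split; [intros [[_ H]|[H _]]; [exact H|lia]|intros H; left; auto].
  - intros m Hm [[H _]|[_ H]]; [lia|exact H].
Qed.

Lemma nbhd_self X j N : infinite X -> sub_from j X N -> nbhd X j N X.
Proof. intros H1 H2. repeat split; auto. Qed.

Lemma InfSub_nbhd M L : InfSub M L <-> nbhd (fun _ => False) 0 L M.
Proof.
  split.
  - intros [HM HML]. split; [exact HM|split; [intros; lia|intros m _; apply HML]].
  - intros [HM [_ HML]]. split; [exact HM|intros m; apply HML; lia].
Qed.

Lemma nbhd_refine s k N X j M Y :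
  nbhd s k N X -> k <= j -> sub_from j M X -> nbhd X j M Y -> nbhd s k N Y.
Proof.
  intros [_ [XB XA]] Hkj HMX [YI [YB YA]]. split; [exact YI|split].
  - intros y Hy. rewrite YB by lia. apply XB, Hy.
  - intros y Hy Yy. apply XA; [exact Hy|].
    destruct (le_lt_dec j y) as [H|H]; [apply HMX; auto|apply YB; auto].
Qed.

(** ** Fusion *)

Section Fusion.

Variable P : subset -> nat -> subset -> Prop.
Hypothesis P_shrink :
  forall t j M M', infinite M' -> sub_from j M' M -> P t j M -> P t j M'.
Hypothesis P_dense :
  forall t j M, infinite M -> exists M', infinite M' /\ sub_from j M' M /\ P t j M'.
Hypothesis P_stem :
  forall t t' j M, (forall m, m < j -> (t m <-> t' m)) -> P t j M -> P t' j M.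

(* At a fixed level j, P can be secured for all stems at once: the stem is fixed one
   position below j at a time, each time for both possible values. *)
Lemma fusion_level j N : infinite N ->
  exists M, infinite M /\ (forall m, M m -> N m /\ j <= m) /\ forall t, P t j M.
Proof.
  assert (Partial : forall i u N, infinite N -> exists M, infinite M /\ sub_from j M N /\
     forall t, (forall m, i <= m -> m < j -> (t m <-> u m)) -> P t j M).
  { induction i as [|i IH]; intros u N' HN.
    - destruct (P_dense u j N' HN) as [M [H1 [H2 H3]]]. exists M. split; [|split]; auto.
      intros t Ht. apply (P_stem u); [|exact H3]. intros m Hm. symmetry. apply Ht; lia.
    - destruct (IH (fun m => m = i \/ u m) N' HN) as [M1 [A1 [B1 C1]]].
      destruct (IH (fun m => m <> i /\ u m) M1 A1) as [M2 [A2 [B2 C2]]].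
      exists M2. split; [exact A2|split; [eapply sub_from_trans; eauto|]].
      intros t Ht. destruct (classic (t i)) as [Ti|Ti].
      + apply (P_shrink t j M1); auto. apply C1. intros m Hm1 Hm2.
        destruct (Nat.eq_dec m i) as [->|Hne]; [tauto|].
        rewrite Ht by lia. split; [auto|intros [H|H]; [congruence|exact H]].
      + apply C2. intros m Hm1 Hm2.
        destruct (Nat.eq_dec m i) as [->|Hne]; [tauto|].
        rewrite Ht by lia. tauto. }
  intros HN. destruct (Partial j (fun _ => False) N HN) as [M [H1 [H2 H3]]].
  exists (fun m => M m /\ j <= m). split; [apply infinite_tail, H1|split].
  - intros m [Hm Hjm]. split; [apply H2; auto|exact Hjm].
  - intros t. apply (P_shrink t j M); [apply infinite_tail, H1| |apply H3; intros; lia].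
    intros m _ [Hm _]. exact Hm.
Qed.

Lemma chain_diagonal (x : nat -> nat) (M : nat -> subset) :
  (forall n m, M (S n) m -> M n m /\ x n < m) -> (forall n, M n (x n)) ->
  infinite (fun m => exists n, x n = m) /\ (forall n, M 0 (x n)) /\
  (forall n, sub_from (S (x n)) (fun m => exists n, x n = m) (M (S n))).
Proof.
  intros Hchain Hx.
  assert (Incr : forall n, x n < x (S n)) by (intros n; apply (Hchain n), Hx).
  assert (Dec : forall n n', n <= n' -> forall m, M n' m -> M n m).
  { intros n n' L. induction L as [|n' L IH]; [auto|intros m Hm; apply IH, (Hchain n'), Hm]. }
  split; [apply infinite_range, Incr|split].
  - intros n. apply (Dec 0 n); [lia|apply Hx].
  - intros n m Hm [n' <-]. apply (Dec (S n) n'); [|apply Hx].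
    destruct (le_lt_dec n' n) as [L|L]; [|lia].
    destruct (Nat.eq_dec n' n) as [->|]; [lia|].
    pose proof (increasing_lt x Incr n' n ltac:(lia)). lia.
Qed.

Lemma fusion k N : infinite N ->
  exists M, infinite M /\ (forall m, M m -> N m /\ k <= m) /\
     (forall t, P t k M) /\ (forall x t, M x -> P t (S x) M).
Proof.
  intros HN.
  set (Q := fun p : nat * subset => infinite (snd p) /\ snd p (fst p)).
  set (R := fun p p' : nat * subset =>
              (forall m, snd p' m -> snd p m /\ S (fst p) <= m) /\ forall t, P t (S (fst p)) (snd p')).
  assert (Step : forall p, Q p -> exists p', Q p' /\ R p p').
  { intros [x M] [HM _]. destruct (fusion_level (S x) M HM) as [M' [H1 [H2 H3]]].
    destruct (H1 0) as [x' [_ Hx']]. exists (x', M'). split; split; auto. }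
  destruct (fusion_level k N HN) as [M0 [H1 [H2 H3]]].
  destruct (H1 0) as [x0 [_ Hx0]].
  destruct (dependent_choice Q R Step (x0, M0)) as [f [Hf0 Hf]]; [split; auto|].
  destruct (chain_diagonal (fun n => fst (f n)) (fun n => snd (f n))) as [DI [D0 DS]].
  { intros n m Hm. destruct (Hf n) as [_ [HR _]]. destruct (HR m Hm). split; [auto|lia]. }
  { intros n. destruct (Hf n) as [[_ Hx] _]. exact Hx. }
  rewrite Hf0 in D0. simpl in D0.
  exists (fun m => exists n, fst (f n) = m). split; [exact DI|split; [|split]].
  - intros m [n <-]. apply H2, D0.
  - intros t. apply (P_shrink t k M0); [exact DI| |apply H3].
    intros m _ [n <-]. apply D0.
  - intros x t [n <-]. apply (P_shrink t _ (snd (f (S n)))); [exact DI|apply DS|].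
    destruct (Hf n) as [_ [_ HP]]. apply HP.
Qed.

End Fusion.

(** ** Acceptance, rejection and the Ramsey properties *)

Definition accepts (F : family) (t : subset) (j : nat) (M : subset) : Prop :=
  forall X, nbhd t j M X -> F X.

Definition rejects (F : family) (t : subset) (j : nat) (M : subset) : Prop :=
  forall M', infinite M' -> sub_from j M' M -> ~ accepts F t j M'.

Definition completely_Ramsey (F : family) : Prop :=
  forall s k N, infinite N -> exists M, infinite M /\ sub_from k M N /\
    (accepts F s k M \/ accepts (fun X => ~ F X) s k M).

Definition Ramsey_null (F : family) : Prop :=
  forall s k N, infinite N -> exists M, infinite M /\ sub_from k M N /\
    accepts (fun X => ~ F X) s k M.

Definition Ellentuck_open (F : family) : Prop :=
  forall X, infinite X -> F X -> exists s k N, nbhd s k N X /\ accepts F s k N.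

Lemma accepts_shrink F t j M M' : sub_from j M' M -> accepts F t j M -> accepts F t j M'.
Proof. intros H A X HX. apply A. eapply nbhd_shrink; eauto. Qed.

Lemma rejects_shrink F t j M M' : sub_from j M' M -> rejects F t j M -> rejects F t j M'.
Proof. intros H R M'' H1 H2. apply R; [exact H1|eapply sub_from_trans; eauto]. Qed.

Lemma accepts_stem F t t' j M :
  (forall m, m < j -> (t m <-> t' m)) -> accepts F t j M -> accepts F t' j M.
Proof. intros E A X HX. apply A. eapply nbhd_stem; [|exact HX]. intros m Hm. symmetry; auto. Qed.

Lemma rejects_stem F t t' j M :
  (forall m, m < j -> (t m <-> t' m)) -> rejects F t j M -> rejects F t' j M.
Proof.
  intros E R M' H1 H2 A. apply (R M' H1 H2).
  eapply accepts_stem; [|exact A]. intros m Hm. symmetry; auto.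
Qed.

Lemma accepts_weaken (F G : family) t j M :
  (forall X, infinite X -> F X -> G X) -> accepts F t j M -> accepts G t j M.
Proof. intros E A X HX. apply E; [eapply nbhd_infinite; eauto|apply A, HX]. Qed.

(** ** Ellentuck open families are completely Ramsey *)

Definition extend (t : subset) (j m : nat) : subset := fun y => (y < j /\ t y) \/ y = m.

Lemma extend_first_point (X t : subset) c x :
  c <= x -> (forall y, y < c -> (X y <-> t y)) -> X x ->
  (forall y, c <= y -> y < x -> ~ X y) -> forall y, y < S x -> (X y <-> extend t c x y).
Proof.
  intros Hcx Hbelow Xx Hgap y Hy. unfold extend. split.
  - intros Xy. destruct (Nat.eq_dec y x) as [->|Hne]; [right; reflexivity|left].
    destruct (le_lt_dec c y) as [L|L]; [exfalso; apply (Hgap y); auto; lia|].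
    split; [exact L|apply Hbelow; auto].
  - intros [[L Ty]| ->]; [apply Hbelow; auto|exact Xx].
Qed.

Section OpenRamsey.

Variable F : family.

Let decided (t : subset) (j : nat) (M : subset) : Prop := accepts F t j M \/ rejects F t j M.

Lemma decision_fusion k N : infinite N ->
  exists M, infinite M /\ (forall m, M m -> N m /\ k <= m) /\
     (forall t, decided t k M) /\ (forall x t, M x -> decided t (S x) M).
Proof.
  apply fusion.
  - intros t j M M' HM' Hs [A|R]; [left; eapply accepts_shrink|right; eapply rejects_shrink]; eauto.
  - intros t j M HM. destruct (classic (rejects F t j M)) as [R|R].
    + exists M. split; [exact HM|split; [apply sub_from_refl|right; exact R]].
    + apply NNPP. intros C. apply R. intros M' H1 H2 A. apply C. exists M'.
      split; [exact H1|split; [exact H2|left; exact A]].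
  - intros t t' j M E [A|R]; [left; eapply accepts_stem|right; eapply rejects_stem]; eauto.
Qed.

(* If M0 decides everything and rejects t at j, then extending t by any large enough
   point m of M0 is still rejected; otherwise the infinitely many accepting points would
   form a set accepting t at j. *)
Lemma rejection_persists M0 t j :
  (forall x t, M0 x -> decided t (S x) M0) -> rejects F t j M0 ->
  exists b, forall m, b <= m -> j <= m -> M0 m -> rejects F (extend t j m) (S m) M0.
Proof.
  intros D0 R. apply NNPP. intros C.
  set (Good := fun m => j <= m /\ M0 m /\ accepts F (extend t j m) (S m) M0).
  assert (GoodI : infinite Good).
  { intros b. apply NNPP. intros C2. apply C. exists b. intros m H1 H2 H3.
    destruct (D0 m (extend t j m) H3) as [A|R']; [|exact R'].
    exfalso. apply C2. exists m. split; [exact H1|split; auto]. }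
  apply (R Good GoodI); [intros m _ [_ [Hm _]]; exact Hm|].
  intros X [XI [XB XA]].
  destruct (least_element (fun x => j <= x /\ X x)) as [x [[Hx1 Hx2] Hx3]].
  { destruct (XI j) as [x Hx]. exists x. exact Hx. }
  destruct (XA x Hx1 Hx2) as [_ [_ Ax]].
  apply Ax. split; [exact XI|split].
  - apply extend_first_point; auto. intros y Hy1 Hy2 Xy. apply (Hx3 y); auto.
  - intros y Hy Xy. apply XA; [lia|exact Xy].
Qed.

Lemma rejection_fusion M0 k :
  infinite M0 -> (forall x t, M0 x -> decided t (S x) M0) ->
  exists M1, infinite M1 /\ (forall m, M1 m -> M0 m /\ k <= m) /\
    forall c t, (c = k \/ exists y, c = S y /\ M1 y) -> rejects F t c M0 ->
      forall m, c <= m -> M1 m -> rejects F (extend t c m) (S m) M0.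
Proof.
  intros I0 D0.
  destruct (fusion (fun t j M => rejects F t j M0 -> forall m, j <= m -> M m -> M0 m ->
                 rejects F (extend t j m) (S m) M0)) with (k := k) (N := M0)
    as [M1 [I1 [S1 [D1k D1]]]]; [| | |exact I0|].
  - intros t j M M' _ Hs H R m Hm1 Hm2 Hm3. apply H; auto.
  - intros t j M HM. destruct (classic (rejects F t j M0)) as [R|R].
    + destruct (rejection_persists M0 t j D0 R) as [b Hb].
      exists (fun m => M m /\ b <= m). split; [apply infinite_tail, HM|split].
      * intros m _ [H _]. exact H.
      * intros _ m H1 [H2 H3] H4. apply Hb; auto.
    + exists M. split; [exact HM|split; [apply sub_from_refl|intros; contradiction]].
  - intros t t' j M E H R m Hm1 Hm2 Hm3.
    apply (rejects_stem F (extend t j m)).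
    + intros y _. unfold extend.
      split; intros [[H1 H2]|H1]; auto; left; split; auto; apply E; auto.
    + apply H; auto. eapply rejects_stem; [|exact R]. intros y Hy. symmetry; auto.
  - exists M1. split; [exact I1|split; [exact S1|]].
    intros c t [->|[y [-> Hy]]] R m Hm1 Hm2.
    + apply D1k; auto. apply S1, Hm2.
    + apply D1; auto. apply S1, Hm2.
Qed.

Lemma rejected_along M0 M1 s k X :
  (forall m, M1 m -> M0 m /\ k <= m) ->
  (forall c t, (c = k \/ exists y, c = S y /\ M1 y) -> rejects F t c M0 ->
     forall m, c <= m -> M1 m -> rejects F (extend t c m) (S m) M0) ->
  rejects F s k M0 -> nbhd s k M1 X ->
  forall x, k <= x -> X x -> rejects F X (S x) M0.
Proof.
  intros S1 Persist R0 [XI [XB XA]].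
  (* Invariant: c is the level just after the last point of X in [k, k + d), or k. *)
  assert (Cut : forall d, exists c, c <= k + d /\ (c = k \/ exists y, c = S y /\ M1 y) /\
                 (forall y, c <= y -> y < k + d -> ~ X y) /\ rejects F X c M0).
  { induction d as [|d [c [Hc [Hcut [Hgap Rc]]]]].
    - exists k. split; [lia|split; [left; reflexivity|split; [intros; lia|]]].
      eapply rejects_stem; [|exact R0]. intros m Hm. symmetry. apply XB, Hm.
    - destruct (classic (X (k + d))) as [Xx|Xx].
      + assert (M1x : M1 (k + d)) by (apply XA; [lia|exact Xx]).
        assert (Hkc : k <= c) by (destruct Hcut as [->|[y [-> Hy]]]; [lia|apply S1 in Hy; lia]).
        exists (S (k + d)). split; [lia|split; [right; exists (k + d); auto|split; [intros; lia|]]].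
        eapply rejects_stem; [|exact (Persist c X Hcut Rc (k + d) Hc M1x)].
        intros y Hy. symmetry. apply extend_first_point; auto. tauto.
      + exists c. split; [lia|split; [exact Hcut|split; [|exact Rc]]].
        intros y Hy1 Hy2. destruct (Nat.eq_dec y (k + d)) as [->|]; [exact Xx|apply Hgap; lia]. }
  intros x Hkx Xx. destruct (Cut (S x - k)) as [c [Hc [_ [Hgap Rc]]]].
  replace (S x) with c; [exact Rc|].
  destruct (le_lt_dec c x) as [L|L]; [exfalso; apply (Hgap x); auto; lia|lia].
Qed.

End OpenRamsey.

(* After deciding all stems
   and propagating rejection, a point X of F in the final neighbourhood would lie in an
   accepted neighbourhood, yet X is rejected at every level S x with x in X. *)
Theorem open_completely_Ramsey F : Ellentuck_open F -> completely_Ramsey F.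
Proof.
  intros HF s k N HN.
  destruct (decision_fusion F k N HN) as [M0 [I0 [S0 [D0k D0]]]].
  destruct (D0k s) as [A|R0].
  { exists M0. split; [exact I0|split; [intros m _ H; apply S0, H|left; exact A]]. }
  destruct (rejection_fusion F M0 k I0 D0) as [M1 [I1 [S1 Persist]]].
  exists M1. split; [exact I1|split; [intros m _ H; apply S0, (S1 m H)|right]].
  intros X HX FX.
  destruct (HF X (nbhd_infinite _ _ _ _ HX) FX) as [s' [k' [N' [HX' A']]]].
  destruct (proj1 HX (k + k')) as [x [Hx Xx]].
  apply (rejected_along F M0 M1 s k X S1 Persist R0 HX x ltac:(lia) Xx
           (fun m => X m /\ S x <= m)).
  - apply infinite_tail, (nbhd_infinite _ _ _ _ HX).
  - intros m Hm [Xm _]. destruct HX as [_ [_ XA]]. apply (S1 m), XA; [lia|exact Xm].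
  - intros Y HY. apply A'. apply (nbhd_refine s' k' N' X (S x) (fun m => X m /\ S x <= m));
      [exact HX'|lia|intros m _ [Xm _]; exact Xm|exact HY].
Qed.

(** ** Closure properties of completely Ramsey families *)

Lemma CR_ext (F G : family) :
  (forall X, infinite X -> (F X <-> G X)) -> completely_Ramsey F -> completely_Ramsey G.
Proof.
  intros E H s k N HN. destruct (H s k N HN) as [M [H1 [H2 A]]].
  exists M. split; [exact H1|split; [exact H2|]].
  destruct A as [A|A]; [left|right]; (eapply accepts_weaken; [|exact A]);
    intros X XI; specialize (E X XI); tauto.
Qed.

Lemma CR_compl F : completely_Ramsey F -> completely_Ramsey (fun X => ~ F X).
Proof.
  intros H s k N HN. destruct (H s k N HN) as [M [H1 [H2 A]]].
  exists M. split; [exact H1|split; [exact H2|]].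
  destruct A as [A|A]; [right|left]; (eapply accepts_weaken; [|exact A]); intros X _; tauto.
Qed.

Lemma CR_full : completely_Ramsey (fun _ => True).
Proof.
  intros s k N HN. exists N. split; [exact HN|split; [apply sub_from_refl|left; intros X _; exact I]].
Qed.

Lemma RN_CR F : Ramsey_null F -> completely_Ramsey F.
Proof. intros H s k N HN. destruct (H s k N HN) as [M [H1 [H2 A]]]. exists M. auto. Qed.

Lemma RN_sub (F G : family) :
  (forall X, infinite X -> G X -> F X) -> Ramsey_null F -> Ramsey_null G.
Proof.
  intros E H s k N HN. destruct (H s k N HN) as [M [H1 [H2 A]]].
  exists M. split; [exact H1|split; [exact H2|]].
  eapply accepts_weaken; [|exact A]. intros X XI NF GX. apply NF, E; assumption.
Qed.

Lemma finite_density (Q : nat -> subset -> Prop) j :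
  (forall n M M', infinite M' -> sub_from j M' M -> Q n M -> Q n M') ->
  (forall n M, infinite M -> exists M', infinite M' /\ sub_from j M' M /\ Q n M') ->
  forall i M, infinite M -> exists M', infinite M' /\ sub_from j M' M /\ forall n, n < i -> Q n M'.
Proof.
  intros Qshrink Qdense. induction i as [|i IH]; intros M HM.
  - exists M. split; [exact HM|split; [apply sub_from_refl|intros; lia]].
  - destruct (IH M HM) as [M1 [A1 [B1 C1]]]. destruct (Qdense i M1 A1) as [M2 [A2 [B2 C2]]].
    exists M2. split; [exact A2|split; [eapply sub_from_trans; eauto|]].
    intros n Hn. destruct (Nat.eq_dec n i) as [->|]; [exact C2|].
    apply (Qshrink n M1); auto. apply C1; lia.
Qed.

(* By fusion, at each level j the first j families can be handled at once; a point of F n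
   is then caught at the level after one of its points beyond k + n. *)
Lemma RN_union (F : nat -> family) :
  (forall n, Ramsey_null (F n)) -> Ramsey_null (fun X => exists n, F n X).
Proof.
  intros H s k N HN.
  destruct (fusion (fun t j M => forall n, n < j -> accepts (fun X => ~ F n X) t j M))
    with (k := k) (N := N) as [M [I0 [S0 [_ D0]]]]; [| | |exact HN|].
  - intros t j M M' _ Hs A n Hn. eapply accepts_shrink; eauto.
  - intros t j M HM. apply finite_density; [|intros n M1 HM1; apply (H n t j M1 HM1)|exact HM].
    intros n M1 M' _ Hs A. eapply accepts_shrink; eauto.
  - intros t t' j M E A n Hn. eapply accepts_stem; eauto.
  - exists M. split; [exact I0|split; [intros m _ Hm; apply S0, Hm|]].
    intros X [XI [XB XA]] [n Fn].
    destruct (XI (k + n)) as [x [Hx1 Hx2]].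
    apply (D0 x X (XA x ltac:(lia) Hx2) n ltac:(lia) X); [|exact Fn].
    split; [exact XI|split; [intros; tauto|]]. intros m Hm Xm. apply XA; [lia|exact Xm].
Qed.

(* After deciding every F n at every level, the points of the union are exactly those that
   enter an accepted neighbourhood; that family is Ellentuck open, hence completely Ramsey. *)
Lemma CR_union (F : nat -> family) :
  (forall n, completely_Ramsey (F n)) -> completely_Ramsey (fun X => exists n, F n X).
Proof.
  intros H s k N HN.
  destruct (fusion (fun t j M => forall n, n < j ->
                      accepts (F n) t j M \/ accepts (fun X => ~ F n X) t j M))
    with (k := k) (N := N) as [M [I0 [S0 [_ D0]]]]; [| | |exact HN|].
  { intros t j M M' _ Hs A n Hn. destruct (A n Hn); [left|right]; eapply accepts_shrink; eauto. }
  { intros t j M HM. apply finite_density; [|intros n M1 HM1; apply (H n t j M1 HM1)|exact HM].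
    intros n M1 M' _ Hs [A|A]; [left|right]; eapply accepts_shrink; eauto. }
  { intros t t' j M E A n Hn. destruct (A n Hn); [left|right]; eapply accepts_stem; eauto. }
  set (U := fun X => infinite X /\ exists j n, k <= j /\ sub_from j X M /\ accepts (F n) X j M).
  assert (UO : Ellentuck_open U).
  { intros X XI [_ [j [n [H1 [H2 H3]]]]]. exists X, j, M. split; [apply nbhd_self; auto|].
    intros Y [YI [YB YA]]. split; [exact YI|]. exists j, n. split; [exact H1|split; [exact YA|]].
    eapply accepts_stem; [|exact H3]. intros m Hm. symmetry; apply YB, Hm. }
  destruct (open_completely_Ramsey U UO s k M I0) as [M' [I1 [S1 [A|A]]]].
  - exists M'. split; [exact I1|split; [intros m Hm H'; apply S0, S1, H'; assumption|left]].
    intros X HX. destruct (A X HX) as [_ [j [n [_ [H2 H3]]]]]. exists n. apply H3.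
    apply nbhd_self; [apply (nbhd_infinite _ _ _ _ HX)|exact H2].
  - exists M'. split; [exact I1|split; [intros m Hm H'; apply S0, S1, H'; assumption|right]].
    intros X HX [n Fn]. destruct HX as [XI [XB XA]].
    destruct (XI (k + n)) as [x [Hx1 Hx2]].
    assert (Mx : M x) by (apply S1; [lia|apply XA; [lia|exact Hx2]]).
    assert (XM : sub_from (S x) X M) by (intros m Hm Xm; apply S1; [lia|apply XA; [lia|exact Xm]]).
    destruct (D0 x X Mx n ltac:(lia)) as [B|B].
    + apply (A X); [split; auto|]. split; [exact XI|].
      exists (S x), n. split; [lia|split; [exact XM|exact B]].
    + apply (B X); [|exact Fn]. split; [exact XI|split; [intros; tauto|exact XM]].
Qed.

Lemma CR_union2 F G :
  completely_Ramsey F -> completely_Ramsey G -> completely_Ramsey (fun X => F X \/ G X).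
Proof.
  intros HF HG. apply (CR_ext (fun X => exists n, (match n with 0 => F | _ => G end) X)).
  - intros X _. split; [intros [[|n] H]; auto|intros [H|H]; [exists 0|exists 1]; auto].
  - apply CR_union. intros [|n]; auto.
Qed.

Lemma CR_inter2 F G :
  completely_Ramsey F -> completely_Ramsey G -> completely_Ramsey (fun X => F X /\ G X).
Proof.
  intros HF HG. apply (CR_ext (fun X => ~ (~ F X \/ ~ G X))); [intros X _; tauto|].
  apply CR_compl, CR_union2; apply CR_compl; assumption.
Qed.

Definition closure (F : family) : family := fun X => infinite X /\
  forall s k N, nbhd s k N X -> exists Y, nbhd s k N Y /\ F Y.

Lemma closure_incl F X : infinite X -> F X -> closure F X.
Proof. intros XI FX. split; [exact XI|]. intros s k N B. exists X. auto. Qed.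

(* The complement of a closure is open, so closures are completely Ramsey. *)
Lemma CR_closure F : completely_Ramsey (closure F).
Proof.
  assert (Ellentuck_open (fun X => ~ closure F X)).
  { intros X XI NC.
    assert (exists s k N, nbhd s k N X /\ ~ exists Y, nbhd s k N Y /\ F Y) as [s [k [N [B NY]]]].
    { apply NNPP. intros C. apply NC. split; [exact XI|]. intros s k N B. apply NNPP. intros C2.
      apply C. exists s, k, N. auto. }
    exists s, k, N. split; [exact B|]. intros Y HY [_ CY]. apply NY, CY, HY. }
  apply (CR_ext (fun X => ~ ~ closure F X)); [intros; tauto|].
  apply CR_compl, open_completely_Ramsey. assumption.
Qed.

(* A completely Ramsey G contained in closure F but disjoint from F is Ramsey-null: no
   neighbourhood can lie inside G, since it would meet F. *)
Lemma RN_closure_gap F G :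
  completely_Ramsey G -> (forall X, infinite X -> G X -> closure F X /\ ~ F X) -> Ramsey_null G.
Proof.
  intros HG E s k N HN. destruct (HG s k N HN) as [M [H1 [H2 [A|A]]]]; [|exists M; auto].
  exfalso. destruct (nbhd_nonempty s k M H1) as [X HX].
  destruct (E X (nbhd_infinite _ _ _ _ HX) (A X HX)) as [[_ CX] _].
  destruct (CX s k M HX) as [Y [HY FY]].
  apply (E Y (nbhd_infinite _ _ _ _ HY) (A Y HY)). exact FY.
Qed.

Lemma RN_list_union (G : list nat -> family) :
  (forall u, Ramsey_null (G u)) -> Ramsey_null (fun X => exists u, G u X).
Proof.
  intros H.
  assert (Len : forall n (G : list nat -> family), (forall u, Ramsey_null (G u)) ->
                  Ramsey_null (fun X => exists u, length u = n /\ G u X)).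
  { induction n as [|n IH]; intros G' HG'.
    - apply (RN_sub (G' [])); [|exact (HG' [])].
      intros X _ [[|a u] [Hu HX]]; [exact HX|discriminate].
    - apply (RN_sub (fun X => exists i, exists u, length u = n /\ G' (i :: u) X)).
      + intros X _ [[|i u] [Hu HX]]; [discriminate|]. exists i, u. simpl in Hu. auto.
      + apply RN_union. intros i. apply (IH (fun u => G' (i :: u))). auto. }
  apply (RN_sub (fun X => exists n, exists u, length u = n /\ G u X)).
  - intros X _ [u Hu]. exists (length u), u. auto.
  - apply RN_union. intros n. apply Len, H.
Qed.

Lemma prefix_S f n : prefix f (S n) = prefix f n ++ [f n].
Proof. unfold prefix. rewrite seq_S, map_app. reflexivity. Qed.

Lemma branch_of_tree (T : list nat -> Prop) :
  T [] -> (forall u, T u -> exists i, T (u ++ [i])) -> exists f : nat -> nat, forall n, T (prefix f n).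
Proof.
  intros T0 Tnext.
  destruct (dependent_choice T (fun u v => exists i, v = u ++ [i])) with (a0 := @nil nat)
    as [p [P0 Pn]]; [|exact T0|].
  { intros u Tu. destruct (Tnext u Tu) as [i Ti]. exists (u ++ [i]). eauto. }
  assert (Len : forall n, length (p n) = n).
  { induction n as [|n IH]; [rewrite P0; reflexivity|].
    destruct (Pn n) as [_ [i ->]]. rewrite length_app, IH. simpl. lia. }
  exists (fun n => nth n (p (S n)) 0).
  assert (Pref : forall n, prefix (fun n => nth n (p (S n)) 0) n = p n).
  { induction n as [|n IH]; [rewrite P0; reflexivity|].
    rewrite prefix_S, IH. destruct (Pn n) as [_ [i ->]].
    rewrite <- (Len n) at 2. rewrite nth_middle. reflexivity. }
  intros n. rewrite Pref. apply Pn.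
Qed.

(* Let Z u collect the sets having a witnessing branch through u,
   and H u = closure (Z u) ∩ F u.  The sets that stop in the tree H at some node u form a
   Ramsey-null family (each piece is a closure gap); off this family, belonging to H []
   already yields a branch, so the Souslin set differs from the completely Ramsey H []
   only inside a Ramsey-null family. *)
Theorem CR_souslin (F : list nat -> family) : (forall u, completely_Ramsey (F u)) ->
  completely_Ramsey (fun X => exists f : nat -> nat, forall n, F (prefix f (S n)) X).
Proof.
  intros HF.
  set (Z := fun u X => exists f, prefix f (length u) = u /\ forall n, F (prefix f (S n)) X).
  set (H := fun u X => closure (Z u) X /\ (u <> [] -> F u X)).
  assert (HCR : forall u, completely_Ramsey (H u)).
  { intros u. apply CR_inter2; [apply CR_closure|]. destruct u as [|a u].
    - apply (CR_ext (fun _ => True)); [|apply CR_full]. intros X _. split; [|auto].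
      intros _ C. congruence.
    - apply (CR_ext (F (a :: u))); [|apply HF]. intros X _.
      split; [auto|intros Hc; apply Hc; discriminate]. }
  assert (ZH : forall u X, infinite X -> Z u X -> H u X).
  { intros u X XI HZ. split; [apply closure_incl; assumption|]. intros Hu.
    destruct HZ as [f [Hf HFf]]. destruct u as [|a u']; [congruence|].
    rewrite <- Hf. apply HFf. }
  set (Stop := fun u X => H u X /\ ~ exists i, H (u ++ [i]) X).
  assert (StopRN : forall u, Ramsey_null (Stop u)).
  { intros u. apply RN_closure_gap with (F := Z u).
    - apply CR_inter2; [apply HCR|]. apply CR_compl, CR_union. intros i. apply HCR.
    - intros X XI [[HC _] ND]. split; [exact HC|]. intros [f [Hf HFf]]. apply ND.
      exists (f (length u)). apply ZH; [exact XI|]. exists f. split; [|exact HFf].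
      rewrite length_app. simpl. rewrite Nat.add_1_r, prefix_S, Hf. reflexivity. }
  pose proof (RN_list_union Stop StopRN) as RRN.
  set (R := fun X => exists u, Stop u X).
  set (Sou := fun X => exists f : nat -> nat, forall n, F (prefix f (S n)) X).
  apply (CR_ext (fun X => (H [] X /\ ~ R X) \/ (Sou X /\ R X))).
  - intros X XI. split.
    + intros [[HX NR] | [SX _]]; [|exact SX].
      destruct (branch_of_tree (fun u => H u X)) as [f Hf]; [exact HX| |].
      { intros u Hu. apply NNPP. intros C. apply NR. exists u. split; assumption. }
      exists f. intros n. apply (Hf (S n)).
      rewrite prefix_S. intros C. apply app_eq_nil in C. destruct C; discriminate.
    + intros SX. destruct (classic (R X)) as [RX|RX]; [right; auto|left; split; [|exact RX]].
      apply ZH; [exact XI|]. destruct SX as [f Hf]. exists f. split; [reflexivity|exact Hf].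
  - apply CR_union2.
    + apply CR_inter2; [apply HCR|]. apply CR_compl, RN_CR, RRN.
    + apply RN_CR. apply (RN_sub R); [intros X _ [_ HR]; exact HR|exact RRN].
Qed.

(** ** Increasing enumerations and the map Delta_C *)

Lemma nth_elem_in X k m : nth_elem X k m -> X m.
Proof. destruct k; simpl; tauto. Qed.

Lemma nth_elem_ge X k : forall m, nth_elem X k m -> k <= m.
Proof.
  induction k as [|k IH]; intros m H; [lia|]. destruct H as [_ [p [H1 [H2 _]]]].
  specialize (IH p H2). lia.
Qed.

Lemma nth_elem_unique X k : forall m m', nth_elem X k m -> nth_elem X k m' -> m = m'.
Proof.
  induction k as [|k IH]; intros m m' H H'.
  - destruct H as [Xm B], H' as [Xm' B'].
    destruct (lt_eq_lt_dec m m') as [[L|L]|L]; [exfalso; apply (B' m); auto|exact L|].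
    exfalso; apply (B m'); auto.
  - destruct H as [Xm [p [P1 [P2 P3]]]], H' as [Xm' [p' [P1' [P2' P3']]]].
    assert (p = p') by (apply IH; assumption). subst p'.
    destruct (lt_eq_lt_dec m m') as [[L|L]|L]; [exfalso; apply (P3' m); auto|exact L|].
    exfalso; apply (P3 m'); auto.
Qed.

Lemma nth_elem_exists X : infinite X -> forall k, exists m, nth_elem X k m.
Proof.
  intros XI. induction k as [|k [p Hp]].
  - destruct (least_element X) as [m [H1 H2]]; [destruct (XI 0) as [m [_ H]]; eauto|].
    exists m. split; assumption.
  - destruct (least_element (fun m => p < m /\ X m)) as [m [[H1 H2] H3]].
    { destruct (XI (S p)) as [m [H1 H2]]. exists m. split; [lia|exact H2]. }
    exists m. split; [exact H2|]. exists p. split; [exact H1|split; [exact Hp|]].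
    intros j Hj1 Hj2 Xj. apply (H3 j); auto.
Qed.

Lemma nth_elem_local X Y k : forall m,
  nth_elem X k m -> (forall y, y <= m -> (X y <-> Y y)) -> nth_elem Y k m.
Proof.
  induction k as [|k IH]; intros m H E.
  - destruct H as [Xm B]. split; [apply E; auto|]. intros j Hj Yj. apply (B j Hj), E; [lia|exact Yj].
  - destruct H as [Xm [p [P1 [P2 P3]]]]. split; [apply E; auto|]. exists p.
    split; [exact P1|split].
    + apply IH; [exact P2|]. intros y Hy. apply E. lia.
    + intros j Hj1 Hj2 Yj. apply (P3 j); auto. apply E; [lia|exact Yj].
Qed.

Lemma nth_elem_range (c : nat -> nat) : (forall i, c i < c (S i)) ->
  forall k, nth_elem (fun x => exists i, c i = x) k (c k).
Proof.
  intros H. pose proof (increasing_lt c H) as Mono.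
  induction k as [|k IH].
  - split; [eauto|]. intros j Hj [i <-]. destruct i; [lia|]. specialize (Mono 0 (S i)). lia.
  - split; [eauto|]. exists (c k). split; [apply H|split; [exact IH|]].
    intros j Hj1 Hj2 [i <-]. destruct (lt_eq_lt_dec i k) as [[L|L]|L].
    + specialize (Mono _ _ L). lia.
    + subst; lia.
    + destruct (Nat.eq_dec i (S k)) as [->|]; [lia|]. specialize (Mono (S k) i). lia.
Qed.

Lemma Delta_infinite C M : (forall a, infinite (C a)) -> infinite M -> infinite (Delta C M).
Proof.
  intros HC MI n.
  destruct (nth_elem_exists M MI (2 * n)) as [a Ha].
  destruct (nth_elem_exists M MI (2 * n + 1)) as [b Hb].
  destruct (nth_elem_exists (C a) (HC a) b) as [m Hm].
  exists m. split; [|exists n, a, b; auto].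
  pose proof (nth_elem_ge _ _ _ Hb). pose proof (nth_elem_ge _ _ _ Hm). lia.
Qed.

Lemma Delta_local C M M' n : (forall y, y < n -> (M y <-> M' y)) ->
  forall m, m < n -> Delta C M m -> Delta C M' m.
Proof.
  intros E m Hm [i [a [b [Ha [Hb Hc]]]]].
  assert (b <= m) by exact (nth_elem_ge _ _ _ Hc).
  assert (a < b).
  { replace (2 * i + 1) with (S (2 * i)) in Hb by lia. destruct Hb as [_ [p [P1 [P2 _]]]].
    rewrite (nth_elem_unique _ _ _ _ Ha P2). exact P1. }
  exists i, a, b. split; [|split; [|exact Hc]]; (apply (nth_elem_local M); [assumption|]);
    intros y Hy; apply E; lia.
Qed.

(** ** C-measurable families pulled back along Delta_C *)

(* Induction on C-measurability; open sets pull back to Ellentuck open families by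
   continuity of Delta_C. *)
Theorem Cmeas_Delta_CR (C : nat -> subset) : (forall a, infinite (C a)) ->
  forall A, Cmeas A -> completely_Ramsey (fun M => A (Delta C M)).
Proof.
  intros HC A HA. induction HA as [U HU|A HA IH|F HF IH|F HF IH|A B HA IH E].
  - apply open_completely_Ramsey. intros M MI [DI UD]. destruct (HU _ UD) as [n Hn].
    exists M, n, M. split; [apply nbhd_self; [exact MI|apply sub_from_refl]|].
    intros Y [YI [YB YA]]. split; [apply Delta_infinite; assumption|]. apply Hn.
    intros i Hi. split; [apply (Delta_local C Y M n)|apply (Delta_local C M Y n)]; auto.
    intros y Hy. symmetry. apply YB, Hy.
  - apply (CR_ext (fun M => ~ A (Delta C M))); [|apply CR_compl, IH].
    intros X XI. split; [intros H; split; [apply Delta_infinite|]; assumption|intros [_ H]; exact H].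
  - exact (CR_union (fun n M => F n (Delta C M)) IH).
  - exact (CR_souslin (fun s M => F s (Delta C M)) IH).
  - apply (CR_ext (fun M => A (Delta C M))); [intros X _; apply E|exact IH].
Qed.

(** ** The diagonal argument for M-families *)

Definition interleave (a b : nat -> nat) (i : nat) : nat :=
  if Nat.even i then a (Nat.div2 i) else b (Nat.div2 i).

Lemma interleave_even a b n : interleave a b (2 * n) = a n.
Proof. unfold interleave. rewrite Nat.even_even, Nat.div2_double. reflexivity. Qed.

Lemma interleave_odd a b n : interleave a b (2 * n + 1) = b n.
Proof. unfold interleave. rewrite Nat.even_odd, Nat.div2_odd'. reflexivity. Qed.

Lemma interleave_cases a b i : interleave a b i = a (Nat.div2 i) \/ interleave a b i = b (Nat.div2 i).
Proof. unfold interleave. destruct (Nat.even i); auto. Qed.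

Lemma interleave_increasing a b : (forall n, a n < b n /\ b n < a (S n)) ->
  forall i, interleave a b i < interleave a b (S i).
Proof.
  intros H i. destruct (Nat.Even_or_Odd i) as [[n ->]|[n ->]].
  - replace (S (2 * n)) with (2 * n + 1) by lia.
    rewrite interleave_even, interleave_odd. apply H.
  - replace (S (2 * n + 1)) with (2 * S n) by lia.
    rewrite interleave_even, interleave_odd. apply H.
Qed.

Lemma Delta_interleave C a b : (forall n, a n < b n /\ b n < a (S n)) ->
  forall m, Delta C (fun x => exists i, interleave a b i = x) m ->
    exists n, nth_elem (C (a n)) (b n) m.
Proof.
  intros H m [n [a' [b' [Ha [Hb Hm]]]]]. exists n.
  pose proof (nth_elem_range _ (interleave_increasing a b H)) as Enum.
  rewrite (nth_elem_unique _ _ _ _ Ha (Enum (2 * n))), interleave_even in Hm.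
  rewrite (nth_elem_unique _ _ _ _ Hb (Enum (2 * n + 1))), interleave_odd in Hm.
  exact Hm.
Qed.

(* The M-family property, applied to the sets {x^a_j : j in L, j > a} for a in L
   arbitrarily large, yields B in A that meets, beyond any bound p, a point x^a_b with
   p < a < b both in L. *)
Lemma M_family_diagonal_set (A : family) (C : nat -> subset) (L : subset) :
  (forall X, A X -> infinite X) -> M_family A -> (forall a, A (C a)) -> infinite L ->
  exists B, A B /\ forall p, exists a b, L a /\ L b /\ p < a /\ a < b /\
    exists m, nth_elem (C a) b m /\ B m.
Proof.
  intros Ainf [Her Mf] HCA LI.
  set (Col := fun a m => exists j, L j /\ a < j /\ nth_elem (C a) j m).
  assert (ColA : forall a, A (Col a)).
  { intros a. apply (Her (C a) _ (HCA a)). split.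
    - intros n. destruct (LI (S a + n)) as [j [Hj1 Hj2]].
      destruct (nth_elem_exists (C a) (Ainf _ (HCA a)) j) as [m Hm].
      exists m. split; [pose proof (nth_elem_ge _ _ _ Hm); lia|].
      exists j. split; [exact Hj2|split; [lia|exact Hm]].
    - intros m [j [_ [_ Hm]]]. exact (nth_elem_in _ _ _ Hm). }
  destruct (choice (fun n a => L a /\ n <= a)) as [g Hg].
  { intros n. destruct (LI n) as [a [H1 H2]]. exists a. auto. }
  destruct (Mf (fun i => Col (g i)) (fun i => ColA (g i))) as [B [AB HB]].
  exists B. split; [exact AB|]. intros p.
  destruct (HB (S p)) as [K HK]. destruct (Ainf B AB K) as [m [Hm1 Hm2]].
  destruct (classic (exists i, S p <= i /\ Col (g i) m)) as [[i [Hi [b [Lb [Hab Hc]]]]]|Hn].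
  - destruct (Hg i) as [La Hia]. exists (g i), b.
    split; [exact La|split; [exact Lb|split; [lia|split; [exact Hab|exists m; auto]]]].
  - exfalso. assert (m < K) by (apply HK; auto). lia.
Qed.

(* Choosing the pairs of the diagonal set B
   one after the other gives M = {a_0 < b_0 < a_1 < ...} in L with Delta_C(M) inside B. *)
Lemma M_family_Delta (A : family) (C : nat -> subset) :
  (forall X, A X -> infinite X) -> M_family A -> (forall a, A (C a)) ->
  forall L, infinite L -> exists M, InfSub M L /\ A (Delta C M).
Proof.
  intros Ainf HM HCA L LI.
  destruct (M_family_diagonal_set A C L Ainf HM HCA LI) as [B [AB Next]].
  set (Good := fun q : nat * nat => L (fst q) /\ L (snd q) /\ fst q < snd q /\
                 exists m, nth_elem (C (fst q)) (snd q) m /\ B m).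
  assert (Step : forall q, Good q -> exists q', Good q' /\ snd q < fst q').
  { intros q _. destruct (Next (snd q)) as [a [b [La [Lb [Hpa [Hab Hm]]]]]].
    exists (a, b). repeat split; assumption. }
  destruct (Next 0) as [a0 [b0 [La0 [Lb0 [_ [Hab0 Hm0]]]]]].
  destruct (dependent_choice Good (fun q q' => snd q < fst q') Step (a0, b0))
    as [q [_ Hq]]; [repeat split; assumption|].
  set (a := fun n => fst (q n)). set (b := fun n => snd (q n)).
  assert (Hab : forall n, a n < b n /\ b n < a (S n)).
  { intros n. destruct (Hq n) as [[_ [_ [H _]]] H']. split; assumption. }
  set (M := fun x => exists i, interleave a b i = x).
  assert (MI : infinite M) by exact (infinite_range _ (interleave_increasing a b Hab)).
  exists M. split.
  - split; [exact MI|]. intros x [i <-].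
    destruct (Hq (Nat.div2 i)) as [[La [Lb _]] _].
    destruct (interleave_cases a b i) as [-> | ->]; assumption.
  - apply (proj1 HM B _ AB). split; [apply Delta_infinite; [|exact MI]|].
    { intros c. apply Ainf, HCA. }
    intros m Hm. destruct (Delta_interleave C a b Hab m Hm) as [n Hn].
    destruct (Hq n) as [[_ [_ [_ [m' [Hm' Bm']]]]] _].
    rewrite (nth_elem_unique _ _ _ _ Hn Hm'). exact Bm'.
Qed.

Theorem lemma7 (A : family) (C : nat -> subset) :
  (forall X, A X -> infinite X) ->
  Cmeas A ->
  M_family A ->
  (forall n, A (C n)) ->
  (forall n n', n <> n' -> forall k, C n k -> C n' k -> False) ->
  forall N, infinite N ->
    exists L, InfSub L N /\ forall M, InfSub M L -> A (Delta C M).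
Proof.
  intros Ainf HA HM HCA _ N NI.
  assert (HC : forall a, infinite (C a)) by (intros a; apply Ainf, HCA).
  destruct (Cmeas_Delta_CR C HC A HA (fun _ => False) 0 N NI) as [L [LI [LN [Acc|Rej]]]].
  - exists L. split; [split; [exact LI|intros m; apply LN; lia]|].
    intros M HML. apply Acc, InfSub_nbhd, HML.
  - (* Homogeneity outside A contradicts the M-family property. *)
    exfalso. destruct (M_family_Delta A C Ainf HM HCA L LI) as [M [HML AM]].
    exact (Rej M (proj1 (InfSub_nbhd M L) HML) AM).
Qed.
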